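(* Let $A^1,A^2,A^3$ be three disjoint cubic graphs with $v(A^i)\equiv 0\pmod 6$ for each $i$, let $a^i\in V(A^i)$ with $N(a^i,A^i)=\{a^i_1,a^i_2,a^i_3\}$, and let $G=Y(A^1,a^1;A^2,a^2;A^3,a^3)$. Let $P$ be a $\Lambda$-factor of $G$. For $i\in\{1,2,3\}$ let $D^i$ be the set of edges of $G$ with exactly one end in $V(A^i-a^i)$ (i.e. $D^i=\{a^i_jz_j: j\in\{1,2,3\}\}$), and let $P^i$ be the union of the components of $P$ that contain an edge of $D^i$. Then the number of components of $P^i$ is $1$ or $2$, for every $i\in\{1,2,3\}$.
   Context: Graphs are finite, undirected, without loops or multiple edges; $v(G)=|V(G)|$; $N(x,G)$ is the set of neighbours of $x$. The graph $Y(A^1,a^1;A^2,a^2;A^3,a^3)$ is obtained from $(A^1-a^1)\cup(A^2-a^2)\cup(A^3-a^3)$ by adding three new vertices $z_1,z_2,z_3$ and the nine new edges $z_ja^i_j$, $i,j\in\{1,2,3\}$. A $\Lambda$-factor of $G$ is a spanning subgraph each of whose components is a path on 3 vertices. *)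

From mathcomp Require Import all_boot.
Set Implicit Arguments.
Unset Strict Implicit.
Unset Printing Implicit Defensive.

Definition simple_graph (T : finType) (e : rel T) : Prop :=
  symmetric e /\ irreflexive e.

Definition nbhd (T : finType) (e : rel T) (x : T) : {set T} := [set y | e x y].

Definition cubic (T : finType) (e : rel T) : Prop :=
  forall x : T, #|nbhd e x| = 3.

Section YConstruction.
(* The three (disjoint) graphs A^1, A^2, A^3 are indexed by 'I_3; they are
   automatically disjoint since they live on distinct types. *)
Variable T : 'I_3 -> finType.
Variable e : forall i, rel (T i).
Variable a : forall i, T i.
(* nb i j is the neighbour a^i_j of a^i (j : 'I_3 stands for j = 1,2,3). *)
Variable nb : forall i, 'I_3 -> T i.

(* Vertex set of Y(A^1,a^1;A^2,a^2;A^3,a^3):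
   inl <i, x> is the vertex x of A^i - a^i, inr j is the new vertex z_j. *)
Definition YV : finType :=
  ({i : 'I_3 & {x : T i | x != a i}} + 'I_3)%type.

Definition Yedge : rel YV := fun u v =>
  match u, v with
  | inl s, inl t => (tag s == tag t) && e (val (tagged s)) (val (tagged_as s t))
  | inl s, inr j => val (tagged s) == nb (tag s) j
  | inr j, inl s => val (tagged s) == nb (tag s) j
  | inr _, inr _ => false
  end.

Definition in_side (i : 'I_3) (u : YV) : bool :=
  if u is inl s then tag s == i else false.

Definition Dedge (i : 'I_3) : rel YV := fun u v =>
  Yedge u v && (in_side i u != in_side i v).
End YConstruction.

Definition component (T : finType) (P : rel T) (v : T) : {set T} :=
  [set w | connect P v w].

Definition Lambda_factor (T : finType) (E P : rel T) : Prop :=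
  [/\ symmetric P, subrel P E &
      forall v : T, exists x y z : T,
        [/\ uniq [:: x; y; z], component P v = [set x; y; z],
            P x y, P y z & ~~ P x z]].

(* The set of components of P that contain an edge of D (so #|..| is the
   number of components of the union P^D of these components). *)
Definition comps_meeting (T : finType) (P D : rel T) : {set {set T}} :=
  [set component P u | u in [pred u | [exists v, P u v && D u v]]].

From mathcomp Require Import all_boot zify.

(* Let W be the union of the three components of P through z_1, z_2, z_3, so
   |W| <= 9.  An edge of G leaving a side V(A^m - a^m) ends at some z_j, so the
   side minus W is a union of components and has size divisible by 3; as the
   side has v(A^m) - 1 = 2 (mod 3) vertices, it meets W in at least 2 vertices,
   and |W| = 3 + (sum over m of |W ∩ side m|) <= 9 forces exactly 2.  Each
   component meeting D^i contains one of these 2 vertices, and some component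
   meets D^i, for otherwise the side would be a union of components. *)

Section Components.
Variables (V : finType) (P : rel V).
Hypothesis symP : symmetric P.

Lemma mem_component v : v \in component P v.
Proof. by rewrite inE connect0. Qed.

Lemma equivalence_connect : equivalence_rel (connect P).
Proof.
move=> x y z; split=> [|Cxy]; first exact: connect0.
by apply/idP/idP; apply: connect_trans; rewrite // sym_connect_sym.
Qed.

Lemma component_eq u v : v \in component P u -> component P u = component P v.
Proof.
rewrite inE => Cuv; apply/setP => w; rewrite !inE.
by have [_ ->] := equivalence_connect u v w.
Qed.

Lemma dvdn_card_closed k (X : {set V}) :
  (forall v, #|component P v| = k) -> closed P X -> k %| #|X|.
Proof.
move=> cardC clX.
have partX := equivalence_partitionP (in3W equivalence_connect) : partition _ X.
rewrite (card_partition partX) (eq_bigr (fun _ => k)) ?sum_nat_const ?dvdn_mull //.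
move=> _ /imsetP[x Xx ->]; rewrite -(cardC x); apply: eq_card => y.
by rewrite !inE andb_idl // => /(closed_connect clX) <-; exact: Xx.
Qed.
End Components.
Arguments component_eq {V P} symP {u v}.
Arguments dvdn_card_closed {V P} symP {k X}.

Lemma card_fibers {V I : finType} (f : V -> I) (X : {set V}) :
  #|X| = \sum_(i : I) #|[set x in X | f x == i]|.
Proof.
rewrite -sum1_card (partition_big f xpredT) //; apply: eq_bigr => i _.
by rewrite -sum1_card; apply: eq_bigl => x; rewrite inE.
Qed.

Lemma card_set3 (V : finType) (x y z : V) : uniq [:: x; y; z] -> #|[set x; y; z]| = 3.
Proof.
by rewrite -setUA cardsU1 cards2 !inE /= !negb_or !andbT => /andP[-> ->].
Qed.

Lemma card_component_Lambda {V : finType} {E P : rel V} v :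
  Lambda_factor E P -> #|component P v| = 3.
Proof. by case=> _ _ /(_ v)[x [y [z [/card_set3 <- -> _ _ _]]]]. Qed.

Section YGraph.
Variables (T : 'I_3 -> finType) (e : forall i, rel (T i)).
Variables (a : forall i, T i) (nb : forall i, 'I_3 -> T i).

Definition side (m : 'I_3) : {set YV a} := [set u | in_side m u].

Lemma card_side m : #|side m| = #|T m|.-1.
Proof.
pose f (x : {x : T m | x != a m}) : YV a := inl (Tagged _ x).
have -> : side m = f @: setT.
  apply/setP => u; rewrite inE; apply/idP/imsetP.
  - by case: u => [[k x]|j] //= /eqP km; subst k; exists x.
  - by case=> x _ ->; rewrite /= eqxx.
rewrite card_imset; last first.
  move=> x y [] /(congr1 (tagged_as (Tagged (fun k => {x : T k | x != a k}) x))).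
  by rewrite !tagged_asE.
by rewrite cardsT card_sig -(cardC1 (a m)).
Qed.

Lemma Yedge_inl_tag {s t} : Yedge e nb (inl s : YV a) (inl t) -> tag s = tag t.
Proof. by case/andP=> /eqP. Qed.

Variable P : rel (YV a).
Hypotheses (symP : symmetric P) (subP : subrel P (Yedge e nb)).
Hypothesis card_component : forall v, #|component P v| = 3.
Hypothesis cardT : forall m, 3 %| #|T m|.

Definition hub : {set YV a} := \bigcup_(j < 3) component P (inr j).

Lemma inr_hub j : inr j \in hub.
Proof. by apply/bigcupP; exists j => //; apply: mem_component. Qed.

Lemma closed_hub : closed P hub.
Proof.
suff hubP x y : P x y -> x \in hub -> y \in hub.
  by move=> x y Pxy; apply/idP/idP; apply: hubP; rewrite // symP.
move=> Pxy /bigcupP[j _ Cjx]; apply/bigcupP; exists j => //.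
by rewrite (component_eq symP Cjx) inE connect1.
Qed.

Lemma card_hub_le : #|hub| <= 9.
Proof.
rewrite /hub !big_ord_recr big_ord0 /= set0U.
apply: leq_trans (leq_card_setU _ _) _; rewrite card_component -[9]/(6 + 3) leq_add2r.
by apply: leq_trans (leq_card_setU _ _) _; rewrite !card_component.
Qed.

Lemma closed_side_hub m : closed P (side m :\: hub).
Proof.
move=> x y Pxy; rewrite !inE.
case: x y Pxy => [s|j] [t|k] Pxy /=; rewrite ?andbF //.
- by rewrite (closed_hub _ _ Pxy) (Yedge_inl_tag (subP _ _ Pxy)).
- by rewrite (closed_hub _ _ Pxy) inr_hub.
- by rewrite -(closed_hub _ _ Pxy) inr_hub.
Qed.

Definition Ypart (u : YV a) : 'I_3 + 'I_3 :=
  match u with inl s => inl (tag s) | inr j => inr j end.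

Lemma card_hub : #|hub| = 3 + \sum_(m < 3) #|side m :&: hub|.
Proof.
rewrite (card_fibers Ypart) big_sumType [RHS]addnC; congr (_ + _).
  by apply: eq_bigr => m _; apply: eq_card => -[s|k]; rewrite !inE //= andbC.
rewrite (eq_bigr (fun _ => 1)) ?sum_nat_const ?card_ord // => j _.
rewrite -[RHS](cards1 (inr j : YV a)).
by apply: eq_card => -[s|k]; rewrite !inE ?inr_hub ?andbF.
Qed.

Lemma card_side_mod3 m : #|side m| %% 3 = 2.
Proof.
have T_gt0 : 0 < #|T m| by apply/card_gt0P; exists (a m).
by rewrite card_side; move: (cardT m) T_gt0; lia.
Qed.

Lemma card_side_hub_ge2 m : 2 <= #|side m :&: hub|.
Proof.
have := dvdn_card_closed symP card_component (closed_side_hub m).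
by have := cardsID hub (side m); have := card_side_mod3 m; lia.
Qed.

Lemma card_side_hub m : #|side m :&: hub| = 2.
Proof.
have := card_hub_le; rewrite card_hub (bigD1 m) //=.
have : \sum_(j < 3 | j != m) 2 <= \sum_(j < 3 | j != m) #|side j :&: hub|.
  by apply: leq_sum => j _; apply: card_side_hub_ge2.
rewrite sum_nat_const cardC1 card_ord /=.
have := card_side_hub_ge2 m.
(* [/=] exposed the body of one occurrence of [#|_|]; [set] identifies the two for [lia]. *)
set c := #|side m :&: hub|; set rest := \sum_(j < 3 | j != m) _.
by clearbody c rest; lia.
Qed.

Lemma Dedge_hub {i u v} : P u v -> Dedge e nb i u v -> u \in hub.
Proof.
case: u v => [s|j] [t|k] Puv; rewrite ?inr_hub // => /andP[Yst].
- by rewrite /= (Yedge_inl_tag Yst) eqxx.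
- by rewrite (closed_hub _ _ Puv) inr_hub.
Qed.

Lemma comps_meeting_sub i :
  comps_meeting P (Dedge e nb i) \subset component P @: (side i :&: hub).
Proof.
apply/subsetP => C /imsetP[u]; rewrite inE => /existsP[v /andP[Puv Duv]] ->.
have hub_u := Dedge_hub Puv Duv.
have hub_v : v \in hub by rewrite -(closed_hub _ _ Puv).
case/andP: Duv => _; case side_u: (in_side i u) => /= side_v.
  by apply/imsetP; exists u; rewrite // !inE side_u.
apply/imsetP; exists v; first by rewrite !inE hub_v andbT; case: in_side side_v.
by apply: (component_eq symP); rewrite inE connect1.
Qed.

Lemma comps_meeting_neq0 i : comps_meeting P (Dedge e nb i) != set0.
Proof.
apply/negP => /eqP noD.
suff: 3 %| #|side i| by rewrite /dvdn card_side_mod3.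
apply: (dvdn_card_closed symP card_component) => x y Pxy; rewrite !inE.
have : component P x \notin comps_meeting P (Dedge e nb i) by rewrite noD inE.
apply: contraNeq => crossing; apply/imsetP; exists x => //.
by rewrite inE; apply/existsP; exists y; rewrite Pxy /Dedge (subP _ _ Pxy).
Qed.

Lemma card_comps_meeting i : 0 < #|comps_meeting P (Dedge e nb i)| <= 2.
Proof.
rewrite card_gt0 comps_meeting_neq0 -(card_side_hub i).
exact: leq_trans (subset_leq_card (comps_meeting_sub i)) (leq_imset_card _ _).
Qed.

End YGraph.
Arguments card_comps_meeting {T e a nb P}.

Theorem mainTheorem7
  (T : 'I_3 -> finType) (e : forall i, rel (T i))
  (a : forall i, T i) (nb : forall i, 'I_3 -> T i)
  (Hsimple : forall i, simple_graph (e i))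
  (Hcubic : forall i, cubic (e i))
  (Hmod6 : forall i, #|T i| %% 6 = 0)
  (Hnb : forall i, nbhd (e i) (a i) = [set nb i j | j : 'I_3])
  (P : rel (YV a))
  (HP : Lambda_factor (Yedge e nb) P) :
  forall i : 'I_3,
    #|comps_meeting P (Dedge e nb i)| = 1 \/
    #|comps_meeting P (Dedge e nb i)| = 2.
Proof.
move=> i; have [symP subP _] := HP.
have cardT m : 3 %| #|T m| by move: (Hmod6 m); lia.
have card_comp v := card_component_Lambda v HP.
by move: (card_comps_meeting symP subP card_comp cardT i); lia.
Qed.
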